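(* Let $(n_0^{(m)},n_1^{(m)})_{m\ge 1}$ be a sequence of pairs of integers with $2\le n_0^{(m)}\le n_1^{(m)}$, $n_1^{(m)}\to\infty$, and $n_0^{(m)}=(\log n_1^{(m)})^{\omega(1)}$, i.e. $\frac{\log n_0^{(m)}}{\log\log n_1^{(m)}}\to\infty$ as $m\to\infty$. Writing $n_0=n_0^{(m)}$, $n_1=n_1^{(m)}$, let $k=\frac{\log n_1}{\log n_0}$ and let $x_0$ be the unique root of the equation $x-1-x^{\frac{k-1}{k}}=0$ in the interval $[1,\infty)$. Then $$ch(K_{n_0,n_1})=(1+o(1))\frac{\log n_1}{\log x_0},$$ i.e. $ch(K_{n_0,n_1})\big/\frac{\log n_1}{\log x_0}\to 1$ as $m\to\infty$.
   Context: All logarithms are to base 2. For a graph $G=(V,E)$, the choice number $ch(G)$ is the minimum integer $k$ such that for every assignment of a list $S(v)$ of at least $k$ colors to each vertex $v\in V$, there is a proper vertex coloring of $G$ assigning to each vertex $v$ a color from $S(v)$. $K_{n_0,n_1}$ denotes the complete bipartite graph with parts of sizes $n_0$ and $n_1$. *)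

From mathcomp Require Import all_boot.
From Stdlib Require Import Reals ClassicalEpsilon.
Set Implicit Arguments. Unset Strict Implicit. Unset Printing Implicit Defensive.

(* A graph is an edge relation e on a finite vertex type V.
   Colours are natural numbers (any finite colour palette injects into nat). *)
Definition choosable (V : finType) (e : rel V) (k : nat) : Prop :=
  forall S : V -> seq nat,
    (forall v, k <= size (undup (S v))) ->
    exists c : V -> nat,
      (forall v, c v \in S v) /\ (forall u v, e u v -> c u <> c v).

Definition is_choice_number (V : finType) (e : rel V) (k : nat) : Prop :=
  choosable e k /\ forall k', choosable e k' -> k <= k'.

Definition ch (V : finType) (e : rel V) : nat :=
  epsilon (inhabits 0) (is_choice_number e).

Definition Kbip (n0 n1 : nat) : rel ('I_n0 + 'I_n1)%type :=
  fun u v => match u, v with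
             | inl _, inr _ => true
             | inr _, inl _ => true
             | _, _ => false
             end.

Definition log2 (x : R) : R := (ln x / ln 2)%R.
Arguments Kbip n0 n1 : clear implicits.

(* Write l = ln n0, L = ln n1 and z = ln x0.  Dividing the equation of x0 by x0 turns it
   into exp (-z) + exp (-z l / L) = 1, and ch(K_{n0,n1}) turns out to be (1 + o(1)) L / z.

   Upper bound: reserve every colour for the n0-side with probability p (realised by counting
   maps from the palette to 'I_b).  A vertex can only fail if all s colours of its list lie on
   the wrong side, so lists of size s can be coloured once n0 (1 - p)^s + n1 p^s < 1.  With
   p^s = 1 / (2 n1) this becomes 2^(-1/s) (n1^(-1/s) + n0^(-1/s)) > 1, which holds for
   s = (1 + eps) L / z by the equation of z.

   Lower bound: give every vertex a random s-subset of a palette of N colours.  In a colouring,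
   the set U of colours used on the n0-side meets every n0-list while no n1-list lies inside U;
   for s = (1 - eps) L / z and N of order L^2 / eps, a fixed U of size j does this with
   probability at most exp (-2N), and there are only 2^N sets U.

   Both error terms are O(eps L / z) as soon as ln n0 is a large multiple of ln ln n1. *)

From Stdlib Require Import Reals Lra ClassicalEpsilon Classical Wf_nat.
From mathcomp Require Import all_boot zify.
Set Implicit Arguments. Unset Strict Implicit. Unset Printing Implicit Defensive.

(** * The choice number *)

Section ChoiceNumber.
Variables (V : finType) (e : rel V).

Lemma choosable_leq k k' : choosable e k -> k <= k' -> choosable e k'.
Proof. by move=> ch_k le_kk' S HS; apply: ch_k => v; apply: leq_trans le_kk' (HS v). Qed.

Lemma ch_is_choice_number k : choosable e k -> is_choice_number e (ch e).
Proof.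
move=> ch_k; apply: (epsilon_spec (inhabits 0) (is_choice_number e)).
have [k0 [[ch_k0 min_k0] _]] := dec_inh_nat_subset_has_unique_least_element
  (choosable e) (fun n => classic _) (ex_intro _ k ch_k).
by exists k0; split=> // k' /min_k0 /leP.
Qed.

Lemma ch_leq k : choosable e k -> ch e <= k.
Proof. by move=> ch_k; apply: (ch_is_choice_number ch_k).2. Qed.

Lemma ltn_ch k k' : choosable e k' -> ~ choosable e k -> k < ch e.
Proof.
move=> ch_k' nch_k; rewrite ltnNge; apply/negP => le_ch.
by apply: nch_k; apply: choosable_leq le_ch; apply: (ch_is_choice_number ch_k').1.
Qed.

End ChoiceNumber.

(** * Choosability of K_{n0,n1} by splitting the palette *)

Lemma union_bound (T I : finType) (B : I -> {set T}) :
  \sum_i #|B i| < #|T| -> exists x, forall i, x \notin B i.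
Proof.
move=> small; have : ~~ ([set: T] \subset \bigcup_i B i).
  apply: contraTN small => /subset_leq_card; rewrite cardsT -leqNgt => le_T.
  apply: leq_trans le_T _; elim/big_rec2: _ => [|i n U _ IH]; first by rewrite cards0.
  by apply: leq_trans (leq_card_setU _ _).1 _; rewrite leq_add2l.
case/subsetPn => x _ /bigcupP notB; exists x => i.
by apply/negP => xB; apply: notB; exists i.
Qed.

Lemma card_ffun_in (I J : finType) (X : {set I}) (Q : pred J) :
  #|[set f : {ffun I -> J} | [forall i in X, f i \in Q]]|
  = #|Q| ^ #|X| * #|J| ^ (#|I| - #|X|).
Proof.
have -> : #|[set f : {ffun I -> J} | [forall i in X, f i \in Q]]|
          = #|family (fun i => if i \in X then Q else predT)|.
  apply: eq_card => f; rewrite !inE; apply/forall_inP/familyP => fQ i.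
    by case: ifP => // /fQ.
  by move=> iX; have := fQ i; rewrite iX.
rewrite card_family foldrE big_map big_enum /= (bigID (mem X)) /=.
rewrite [P in P * _](eq_bigr (fun _ => #|Q|)) => [|i ->] //.
rewrite [P in _ * P](eq_bigr (fun _ => #|J|)) => [|i /negbTE ->] //.
by rewrite !prod_nat_const -(cardsC X) addKn cardsE.
Qed.

Lemma card_ffun_in_le (I J : finType) (X : {set I}) (Q : pred J) s :
  s <= #|X| -> #|[set f : {ffun I -> J} | [forall i in X, f i \in Q]]|
               <= #|Q| ^ s * #|J| ^ (#|I| - s).
Proof.
move=> le_sX; rewrite card_ffun_in.
have le_XI : #|X| <= #|I| by apply: max_card.
have -> : #|I| - s = (#|X| - s) + (#|I| - #|X|) by lia.
rewrite -{1}(subnKC le_sX) !expnD -!mulnA leq_mul // leq_mul //.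
by case: (#|X| - s) => [|k] //; rewrite leq_exp2r // max_card.
Qed.

Lemma card_ord_lt b a : a <= b -> #|[pred j : 'I_b | j < a]| = a.
Proof.
move=> le_ab; have widen_inj : injective (widen_ord le_ab).
  by move=> i j /(congr1 val) /= /val_inj.
rewrite -[RHS](card_ord a) -(card_imset _ widen_inj).
apply: eq_card => j; rewrite !inE; apply/idP/imsetP => [lt_ja|[i _ ->]].
  by exists (Ordinal lt_ja) => //; apply: val_inj.
exact: (ltn_ord i).
Qed.

Lemma card_ord_geq b a : a <= b -> #|[pred j : 'I_b | a <= j]| = b - a.
Proof.
move=> le_ab; rewrite -[in RHS](card_ord_lt le_ab) -[b in b - _]card_ord.
rewrite -(cardC [pred j : 'I_b | j < a]) addKn.
by apply: eq_card => j; rewrite !inE /= -leqNgt.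
Qed.

Lemma size_undup_leq_card (n : nat) (s : seq nat) : all (gtn n) s ->
  size (undup s) <= #|[set i : 'I_n | val i \in s]|.
Proof.
move=> /allP lt_n; rewrite cardE -(size_map val); apply: uniq_leq_size.
  exact: undup_uniq.
move=> x; rewrite mem_undup => xs; apply/mapP; exists (Ordinal (lt_n x xs)) => //.
by rewrite mem_enum inE.
Qed.

Lemma Kbip_colorable_of_split n0 n1 (S : 'I_n0 + 'I_n1 -> seq nat) (W : pred nat) :
  (forall u, has W (S (inl u))) -> (forall v, has (predC W) (S (inr v))) ->
  exists c : 'I_n0 + 'I_n1 -> nat,
    (forall x, c x \in S x) /\ (forall x y, Kbip n0 n1 x y -> c x <> c y).
Proof.
move=> hasW hasWC.
pose P (x : 'I_n0 + 'I_n1) := if x is inl _ then W else predC W.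
have hasP x : has (P x) (S x) by case: x.
pose c x := nth 0 (S x) (find (P x) (S x)).
have cW u : W (c (inl u)) := nth_find 0 (hasP (inl u)).
have cWC v : ~~ W (c (inr v)) := nth_find 0 (hasP (inr v)).
exists c; split=> [x|]; first by rewrite mem_nth // -has_find.
move=> [u|u] [v|v] //= _ eq_c.
  by have := cWC v; rewrite -eq_c cW.
by have := cWC u; rewrite eq_c cW.
Qed.

Lemma Kbip_choosable_of_count n0 n1 s a b : 0 < b -> a <= b ->
  n0 * (b - a) ^ s + n1 * a ^ s < b ^ s -> choosable (Kbip n0 n1) s.
Proof.
move=> b_gt0 le_ab count S size_S.
pose n := (\max_x \max_(y <- S x) y + s).+1.
have lt_n x : all (gtn n) (S x).
  apply/allP => y yS; rewrite /= ltnS; apply: leq_trans (leq_addr s _).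
  exact: leq_trans (leq_bigmax_seq y yS isT) (leq_bigmax x).
pose X x := [set i : 'I_n | val i \in S x].
(* f y < a reserves colour y for the n0-side. *)
pose wrong (x : 'I_n0 + 'I_n1) : pred 'I_b :=
  if x is inl _ then [pred j : 'I_b | a <= j] else [pred j : 'I_b | j < a].
pose bad x := [set f : {ffun 'I_n -> 'I_b} | [forall i in X x, f i \in wrong x]].
have card_bad x : #|bad x| <= #|wrong x| ^ s * b ^ (n - s).
  have := card_ffun_in_le (wrong x) (leq_trans (size_S x) (size_undup_leq_card (lt_n x))).
  by rewrite !card_ord.
have [f good] : exists f, forall x, f \notin bad x.
  apply: union_bound; apply: (@leq_ltn_trans (\sum_x #|wrong x| ^ s * b ^ (n - s))).
    by apply: leq_sum => x _.
  rewrite big_sumType /= !sum_nat_const card_ord_geq // card_ord_lt //.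
  rewrite card_ffun !card_ord -[in X in _ < X](subnKC (_ : s <= n)) ?expnD; last by lia.
  by rewrite !mulnA -mulnDl ltn_pmul2r ?expn_gt0 ?b_gt0.
have inX x i : i \in X x -> val i \in S x by rewrite inE.
apply: (@Kbip_colorable_of_split _ _ S [pred y | f (inord y) < a]) => [u|v].
  have := good (inl u); rewrite inE => /forall_inPn [i /inX iS].
  by rewrite inE /= -ltnNge => lt_fi; apply/hasP; exists (val i); rewrite //= inord_val.
have := good (inr v); rewrite inE => /forall_inPn [i /inX iS].
by rewrite inE /= => nlt_fi; apply/hasP; exists (val i); rewrite //= inord_val.
Qed.

(** * Non-choosability of K_{n0,n1} from lists of s-subsets *)

Section KSubsets.
Variables N s : nat.

Definition ksubset := {X : {set 'I_N} | #|X| == s}.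

Lemma card_ksubset : #|{: ksubset}| = 'C(N, s).
Proof. by rewrite card_sig -[N in 'C(N, _)](card_ord N) -card_draws cardsE. Qed.

Lemma card_ksubset_sub (B : {set 'I_N}) :
  #|[pred X : ksubset | val X \subset B]| = 'C(#|B|, s).
Proof.
rewrite -cards_draws -(card_imset _ val_inj) -cardsE; apply: eq_card => Y.
rewrite !inE; apply/imsetP/andP => [[X] | [YB Ys]].
  by rewrite inE => XB ->; split=> //; apply: (valP X).
by exists (exist _ Y Ys); rewrite ?inE.
Qed.

Lemma card_ksubset_not_sub (U : {set 'I_N}) :
  #|[pred X : ksubset | ~~ (val X \subset U)]| = 'C(N, s) - 'C(#|U|, s).
Proof.
rewrite -card_ksubset -card_ksubset_sub -(cardC [pred X : ksubset | val X \subset U]) addKn.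
by apply: eq_card.
Qed.

Lemma card_ksubset_meet (U : {set 'I_N}) :
  #|[pred X : ksubset | val X :&: U != set0]| = 'C(N, s) - 'C(N - #|U|, s).
Proof.
have -> : N - #|U| = #|~: U| by rewrite [#|~: U|]cardsCs setCK card_ord.
rewrite -card_ksubset_not_sub.
by apply: eq_card => X; rewrite !inE setI_eq0 disjoints_subset.
Qed.

End KSubsets.

Lemma Kbip_not_choosable_of_lists n0 n1 N s
    (f : 'I_n0 -> ksubset N s) (g : 'I_n1 -> ksubset N s) :
  (forall U : {set 'I_N},
     (exists a, val (f a) :&: U == set0) \/ (exists b, val (g b) \subset U)) ->
  ~ choosable (Kbip n0 n1) s.
Proof.
move=> unsep ch_s.
pose L (x : 'I_n0 + 'I_n1) : {set 'I_N} :=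
  match x with inl a => val (f a) | inr b => val (g b) end.
pose S x := map val (enum (L x)).
have size_S x : s <= size (undup (S x)).
  rewrite /S undup_id; last by rewrite (map_inj_uniq (@ord_inj N)) enum_uniq.
  rewrite size_map -cardE.
  by case: x => [a|b]; [move: (valP (f a)) | move: (valP (g b))] => /eqP ->.
have [c [cS c_proper]] := ch_s S size_S.
have cL x : exists2 i, i \in L x & val i = c x.
  by have /mapP [i iL ->] := cS x; exists i; rewrite // -mem_enum.
pose U := [set i : 'I_N | [exists a, c (inl a) == val i]].
case: (unsep U) => [[a /eqP /setP meet0] | [b /subsetP gU]].
  have [i ia ci] := cL (inl a); have := meet0 i; rewrite !inE ia /=.
  by move/negbT/existsPn/(_ a); rewrite ci eqxx.
have [i ib ci] := cL (inr b); have /gU := ib; rewrite inE => /existsP [a /eqP ca].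
by apply: (c_proper (inl a) (inr b)); rewrite // ca ci.
Qed.

Lemma Kbip_not_choosable_of_count n0 n1 s N :
  (forall j, j <= N -> 2 ^ N * (('C(N, s) - 'C(N - j, s)) ^ n0 * ('C(N, s) - 'C(j, s)) ^ n1)
                       < 'C(N, s) ^ (n0 + n1)) ->
  ~ choosable (Kbip n0 n1) s.
Proof.
move=> small.
pose T := ({ffun 'I_n0 -> ksubset N s} * {ffun 'I_n1 -> ksubset N s})%type.
pose sep U := [set fg : T | [forall a, val (fg.1 a) :&: U != set0]
                            && [forall b, ~~ (val (fg.2 b) \subset U)]].
have card_sep U : #|sep U|
    = ('C(N, s) - 'C(N - #|U|, s)) ^ n0 * ('C(N, s) - 'C(#|U|, s)) ^ n1.
  have -> : sep U = setX
      [set f | f \in ffun_on [pred X : ksubset N s | val X :&: U != set0]]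
      [set g | g \in ffun_on [pred X : ksubset N s | ~~ (val X \subset U)]].
    by apply/setP => [[f g]]; rewrite !inE.
  rewrite cardsX !cardsE !card_ffun_on card_ksubset_meet card_ksubset_not_sub.
  by rewrite !card_ord.
have total_gt0 : 0 < 'C(N, s) ^ (n0 + n1) by apply: leq_ltn_trans (small 0 _).
have [[f g] unsep] : exists fg, forall U, fg \notin sep U.
  apply: union_bound; rewrite card_prod !card_ffun card_ksubset !card_ord -expnD.
  rewrite -(ltn_pmul2l (expn_gt0 2 N)) big_distrr /=.
  apply: (@leq_ltn_trans (\sum_(U : {set 'I_N}) ('C(N, s) ^ (n0 + n1)).-1)).
    apply: leq_sum => U _; rewrite card_sep -ltnS prednK //.
    by apply: small; rewrite -[N in _ <= N]card_ord max_card.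
  rewrite sum_nat_const -cardsT -powersetT card_powerset cardsT card_ord.
  by rewrite ltn_pmul2l ?expn_gt0 // prednK.
apply: (@Kbip_not_choosable_of_lists n0 n1 N s f g) => U.
have := unsep U; rewrite inE negb_and => /orP [/forallPn [a] | /forallPn [b]].
  by rewrite negbK => ?; left; exists a.
by rewrite negbK => ?; right; exists b.
Qed.

Open Scope R_scope.

Lemma INR_addn m n : INR (m + n)%N = INR m + INR n.
Proof. exact: plus_INR. Qed.

Lemma INR_muln m n : INR (m * n)%N = INR m * INR n.
Proof. exact: mult_INR. Qed.

Lemma INR_subn m n : (n <= m)%N -> INR (m - n)%N = INR m - INR n.
Proof. by move/leP; apply: minus_INR. Qed.

Lemma INR_expn m n : INR (m ^ n)%N = INR m ^ n.
Proof. by elim: n => [|n IH] //; rewrite expnS INR_muln IH. Qed.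

Lemma INR_leq m n : (m <= n)%N -> INR m <= INR n.
Proof. by move/leP; apply: le_INR. Qed.

Lemma leq_INR m n : INR m <= INR n -> (m <= n)%N.
Proof. by move/INR_le/leP. Qed.

Lemma ltn_INR m n : INR m < INR n -> (m < n)%N.
Proof. by move/INR_lt/ltP. Qed.

Lemma nat_floor x : 0 <= x -> exists n : nat, INR n <= x < INR n + 1.
Proof.
move=> x_ge0; have [up_gt up_le] := archimed x.
have up_gt0 : (0 < up x)%Z by apply: lt_IZR; lra.
exists (Z.to_nat (up x - 1)); rewrite INR_IZR_INZ Znat.Z2Nat.id; last by lia.
by rewrite minus_IZR /=; lra.
Qed.

Lemma nat_ceil x : 0 <= x -> exists n : nat, x < INR n <= x + 1.
Proof. by move=> /nat_floor [n n_x]; exists n.+1; rewrite S_INR; lra. Qed.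

Lemma pow_lt_pow_l x y n : 0 <= x < y -> (0 < n)%N -> x ^ n < y ^ n.
Proof.
move=> xy; elim: n => [//|[|n] IH] _; first by rewrite /= !Rmult_1_r; lra.
have := IH isT; have := pow_le x n.+1 (proj1 xy); rewrite -!tech_pow_Rmult; nra.
Qed.

Lemma exp_monotone x y : x <= y -> exp x <= exp y.
Proof. by case=> [/exp_increasing/Rlt_le | ->] //; apply: Rle_refl. Qed.

Lemma ln_monotone x y : 0 < x -> x <= y -> ln x <= ln y.
Proof. by move=> x_gt0 [/(ln_increasing _ _ x_gt0)/Rlt_le | ->] //; apply: Rle_refl. Qed.

Lemma exp_pow x n : exp x ^ n = exp (INR n * x).
Proof.
rewrite -[LHS]exp_ln; last exact: pow_lt (exp_pos x).
by rewrite ln_pow ?ln_exp //; apply: exp_pos.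
Qed.

Lemma exp_mul_opp x : exp x * exp (- x) = 1.
Proof. by rewrite -exp_plus Rplus_opp_r exp_0. Qed.

Lemma ln2_lt_1 : ln 2 < 1.
Proof.
rewrite -[1]ln_exp; apply: ln_increasing; first lra.
by have := exp_ineq1 1; lra.
Qed.

Lemma exp_le_1_add_2x t : 0 <= t <= 1 / 2 -> exp t <= 1 + 2 * t.
Proof.
move=> t_bounds; have := exp_ineq1_le (- t); have := exp_mul_opp t.
by have := exp_pos t; nra.
Qed.

Lemma Rabs_ratio_sub1_le c r e : 0 < r -> (1 - e) * r <= c <= (1 + e) * r ->
  Rabs (c / r - 1) <= e.
Proof.
move=> r_gt0 c_bounds; have -> : c / r - 1 = (c - r) * / r by field; lra.
have := Rinv_0_lt_compat r r_gt0; have : r * / r = 1 by field; lra.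
by move=> ? ?; apply: Rabs_le; split; nra.
Qed.

Lemma mul_exp_sub_pow (s : nat) c K x : 0 < c -> INR s * x = ln c ->
  c * exp (K - x) ^ s = exp (INR s * K).
Proof.
move=> c_gt0 sx; rewrite exp_pow Rmult_minus_distr_l sx /Rminus exp_plus exp_Ropp exp_ln //.
by field; lra.
Qed.

Lemma Kbip_choosable_of_weights n0 n1 s (p w : R) :
  (0 < n0)%N -> (0 < s)%N -> 0 < p <= 1 -> 0 < w -> 1 < p + w ->
  2 * INR n1 * p ^ s <= 1 -> 2 * INR n0 * w ^ s <= 1 -> choosable (Kbip n0 n1) s.
Proof.
move=> n0_gt0 s_gt0 p_bounds w_gt0 pw_gt1 n1_p n0_w.
have [b [b_lb b_ub]] : exists b : nat, / (p + w - 1) < INR b <= / (p + w - 1) + 1.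
  by apply: nat_ceil; apply/Rlt_le/Rinv_0_lt_compat; lra.
have b_gt1 : 1 < INR b * (p + w - 1).
  by have := Rmult_lt_compat_r (p + w - 1) _ _ ltac:(lra) b_lb; rewrite Rinv_l; lra.
(* a / b approximates p from below, closely enough that b - a < w b. *)
have [a [a_le a_gt]] : exists a : nat, INR a <= p * INR b < INR a + 1.
  by apply: nat_floor; apply: Rmult_le_pos; [lra | apply: pos_INR].
have le_ab : INR a <= INR b by nra.
have b_gt0 : (0 < b)%N by apply: ltn_INR => /=; have := Rinv_0_lt_compat (p + w - 1); lra.
apply: (@Kbip_choosable_of_count _ _ _ a b b_gt0 (leq_INR le_ab)).
apply: ltn_INR; rewrite INR_addn !INR_muln !INR_expn INR_subn; last exact: leq_INR.
have hi : (INR b - INR a) ^ s < (w * INR b) ^ s.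
  by apply: pow_lt_pow_l => //; lra.
have lo : INR a ^ s <= (p * INR b) ^ s by apply: pow_incr; have := pos_INR a; lra.
rewrite !Rpow_mult_distr in hi lo.
have n0_pos : 0 < INR n0 by apply: (lt_INR 0); apply/ltP.
have := pow_le (INR b) s (pos_INR b); have := pos_INR n1; nra.
Qed.

Lemma binomial_ratio_leq N s j : (s <= j)%N ->
  ((j - s) ^ s * 'C(N, s) <= 'C(j, s) * N ^ s)%N.
Proof.
move=> le_sj; rewrite -(leq_pmul2r (fact_gt0 s)) -mulnA bin_ffact mulnAC bin_ffact.
have prod_const c : (c ^ s = \prod_(i < s) c)%N by rewrite prod_nat_const card_ord.
rewrite !ffact_prod !prod_const; apply: leq_mul; apply: leq_prod => i _.
  by apply: leq_sub2l; apply: ltnW (ltn_ord i).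
exact: leq_subr.
Qed.

Lemma binomial_tail_le N s j n (A : R) : (s <= j)%N -> (j <= N)%N -> (0 < N)%N ->
  0 <= A -> A * INR N <= INR j - INR s ->
  INR (('C(N, s) - 'C(j, s)) ^ n) <= INR 'C(N, s) ^ n * exp (- (INR n * A ^ s)).
Proof.
move=> le_sj le_jN N_gt0 A_ge0 A_le.
have N_pos : 0 < INR N by apply: (lt_INR 0); apply/ltP.
have M_pos : 0 < INR 'C(N, s) by apply: (lt_INR 0); apply/ltP; rewrite bin_gt0 (leq_trans le_sj).
have le_binj : INR 'C(j, s) <= INR 'C(N, s) by apply: INR_leq; apply: leq_bin2l.
set M := INR 'C(N, s) in M_pos le_binj *; set x := INR 'C(j, s) in le_binj *.
have ratio_ge : A ^ s <= x / M.
  have := INR_leq (binomial_ratio_leq N le_sj); rewrite !INR_muln !INR_expn INR_subn // -/M -/x.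
  have : (A * INR N) ^ s <= (INR j - INR s) ^ s by apply: pow_incr; nra.
  rewrite Rpow_mult_distr; have := pow_lt _ s N_pos; have := pow_le A s A_ge0.
  move=> ? ? ? ?; apply: (Rmult_le_reg_r M) => //; rewrite /Rdiv Rmult_assoc Rinv_l; nra.
rewrite INR_expn INR_subn ?leq_bin2l // -/M -/x.
apply: Rle_trans (_ : (M * exp (- (x / M))) ^ n <= _).
  apply: pow_incr; split; first lra.
  have -> : M - x = M * (1 + - (x / M)) by field; lra.
  by apply: Rmult_le_compat_l; [lra | apply: exp_ineq1_le].
rewrite Rpow_mult_distr exp_pow; apply: Rmult_le_compat_l; first by apply: pow_le; lra.
by apply: exp_monotone; have := pos_INR n; nra.
Qed.

Lemma binomial_tails_mul_le n0 n1 s N j (A B : R) : (0 < N)%N -> (j <= N)%N ->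
  0 <= A -> 0 <= B -> A * INR N + B * INR N + 2 * INR s <= INR N ->
  2 * INR N <= INR n1 * A ^ s -> 2 * INR N <= INR n0 * B ^ s ->
  INR (('C(N, s) - 'C(N - j, s)) ^ n0) * INR (('C(N, s) - 'C(j, s)) ^ n1)
  <= INR 'C(N, s) ^ (n0 + n1) * exp (- (2 * INR N)).
Proof.
move=> N_gt0 le_jN A_ge0 B_ge0 parts n1_A n0_B.
have N_pos : 0 < INR N by apply: (lt_INR 0); apply/ltP.
have le_sN : (s <= N)%N by apply: leq_INR; nra.
have j_le : INR j <= INR N := INR_leq le_jN.
have M_pos : 0 < INR 'C(N, s) by apply: (lt_INR 0); apply/ltP; rewrite bin_gt0.
have crude k n : INR (('C(N, s) - k) ^ n) <= INR 'C(N, s) ^ n.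
  by rewrite INR_expn; apply: pow_incr; split; [apply: pos_INR | apply/INR_leq/leq_subr].
have tail k n C : (s <= k)%N -> (k <= N)%N -> 0 <= C -> C * INR N <= INR k - INR s ->
    2 * INR N <= INR n * C ^ s ->
    INR (('C(N, s) - 'C(k, s)) ^ n) <= INR 'C(N, s) ^ n * exp (- (2 * INR N)).
  move=> le_sk le_kN C_ge0 C_le n_C.
  apply: Rle_trans (binomial_tail_le n le_sk le_kN N_gt0 C_ge0 C_le) _.
  by apply: Rmult_le_compat_l; [apply: pow_le; lra | apply: exp_monotone; lra].
rewrite pow_add; case: (Rle_lt_dec (A * INR N) (INR j - INR s)) => [A_le | A_gt].
  have le_sj : (s <= j)%N by apply: leq_INR; nra.
  apply: Rle_trans (Rmult_le_compat _ _ _ _ (pos_INR _) (pos_INR _)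
    (crude _ n0) (tail _ n1 _ le_sj le_jN A_ge0 A_le n1_A)) _.
  by apply: Req_le; ring.
have le_s_Nj : (s <= N - j)%N by apply: leq_INR; rewrite INR_subn //; nra.
have B_le : B * INR N <= INR (N - j) - INR s by rewrite INR_subn //; nra.
apply: Rle_trans (Rmult_le_compat _ _ _ _ (pos_INR _) (pos_INR _)
  (tail _ n0 _ le_s_Nj (leq_subr j N) B_ge0 B_le n0_B) (crude _ n1)) _.
by apply: Req_le; ring.
Qed.

Lemma Kbip_not_choosable_of_weights n0 n1 s N (A B : R) :
  (0 < N)%N -> 0 <= A -> 0 <= B ->
  2 * INR N <= INR n1 * A ^ s -> 2 * INR N <= INR n0 * B ^ s ->
  A + B + 2 * INR s / INR N <= 1 -> ~ choosable (Kbip n0 n1) s.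
Proof.
move=> N_gt0 A_ge0 B_ge0 n1_A n0_B sum_le.
have N_pos : 0 < INR N by apply: (lt_INR 0); apply/ltP.
have parts : A * INR N + B * INR N + 2 * INR s <= INR N.
  have -> : A * INR N + B * INR N + 2 * INR s = (A + B + 2 * INR s / INR N) * INR N.
    by field; lra.
  by have := Rmult_le_compat_r (INR N) _ _ (Rlt_le _ _ N_pos) sum_le; lra.
have M_pos : 0 < INR 'C(N, s).
  by apply: (lt_INR 0); apply/ltP; rewrite bin_gt0; apply: leq_INR; nra.
have two_exp : 2 ^ N * exp (- (2 * INR N)) < 1.
  have -> : 2 ^ N = exp (INR N * ln 2) by rewrite -exp_pow exp_ln //; lra.
  by rewrite -exp_plus -exp_0; apply: exp_increasing; have := ln2_lt_1; nra.
apply: Kbip_not_choosable_of_count => j le_jN.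
have := binomial_tails_mul_le N_gt0 le_jN A_ge0 B_ge0 parts n1_A n0_B.
rewrite !INR_expn => tails; apply: ltn_INR.
rewrite !INR_muln !INR_expn (_ : INR 2 = 2) /=; last lra.
have := pow_lt 2 N ltac:(lra); have := pow_lt _ (n0 + n1) M_pos; nra.
Qed.

(** * The root x0 and the asymptotics of the choice number *)

Section Root.
Variables z q : R.
Hypotheses (z_gt0 : 0 < z) (q_gt0 : 0 < q) (q_le1 : q <= 1).
Hypothesis root : exp (- z) + exp (- (z * q)) = 1.

Lemma root_exp_neg_le_half : exp (- z) <= / 2.
Proof.
have : exp (- z) <= exp (- (z * q)) by apply: exp_monotone; nra.
by lra.
Qed.

Lemma root_half_lt : / 2 < z.
Proof.
have := root_exp_neg_le_half; have := exp_mul_opp z; have := exp_pos (- z) => ? ? ?.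
have two_le : 2 <= exp z by nra.
by have := @ln_monotone 2 _ ltac:(lra) two_le; rewrite ln_exp; have := ln_lt_2; lra.
Qed.

Lemma root_exp_neg_ge : q / 4 <= exp (- z).
Proof.
have w_bound : (1 + z * q) * exp (- (z * q)) <= 1.
  have := exp_ineq1_le (z * q); have := exp_mul_opp (z * q); have := exp_pos (- (z * q)).
  by nra.
rewrite (_ : exp (- (z * q)) = 1 - exp (- z)) in w_bound; last by lra.
have := root_exp_neg_le_half; have := root_half_lt; have := Rmult_lt_0_compat _ _ z_gt0 q_gt0.
by nra.
Qed.

Lemma root_sum_ge a : 0 <= a <= z -> 1 + (z - a) * exp (- z) <= exp (- a) + exp (- (a * q)).
Proof.
move=> a_bounds; have -> : exp (- a) = exp (- z) * exp (z - a).
  by rewrite -exp_plus; congr exp; ring.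
have := exp_ineq1_le (z - a); have := exp_pos (- z).
have : exp (- (z * q)) <= exp (- (a * q)) by apply: exp_monotone; nra.
by nra.
Qed.

Lemma root_sum_le a : z <= a -> exp (- a) + exp (- (a * q)) <= exp (- ((a - z) * q)).
Proof.
move=> le_za; rewrite -[X in _ <= X]Rmult_1_l -root Rmult_plus_distr_r -!exp_plus.
have -> : - (z * q) + - ((a - z) * q) = - (a * q) by ring.
by apply: Rplus_le_compat_r; apply: exp_monotone; nra.
Qed.

End Root.

Lemma exp_sub_add_ratio_le (K eta s N : R) : 0 < eta -> 0 < N ->
  2 * s * (2 + eta) / eta <= N -> K <= eta / 2 -> exp (K - eta) + 2 * s / N <= 1.
Proof.
move=> eta_gt0 N_gt0 N_ge K_le.
have exp_le : exp (K - eta) * (2 + eta) <= 2.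
  have := exp_ineq1_le (eta / 2); have := exp_mul_opp (eta / 2); have := exp_pos (- (eta / 2)).
  have : exp (K - eta) <= exp (- (eta / 2)) by apply: exp_monotone; lra.
  by nra.
have le_etaN : 2 * s * (2 + eta) <= eta * N.
  have : 2 * s * (2 + eta) / eta * eta = 2 * s * (2 + eta) by field; lra.
  by nra.
have ratio_le : 2 * s / N * (2 + eta) <= eta.
  apply: (Rmult_le_reg_r N) => //.
  by rewrite (_ : 2 * s / N * (2 + eta) * N = 2 * s * (2 + eta)) //; field; lra.
apply: (Rmult_le_reg_r (2 + eta)); lra.
Qed.

Lemma exists_palette (s eta l L eps : R) : 0 < eps <= 1 -> 1 <= l -> 1 <= L ->
  0 < s <= 2 * L -> 0 < eta -> eps * l <= s * eta ->
  2 * ln (42 / eps) + 4 * ln L <= eps * l ->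
  exists N : nat, [/\ 0 < INR N, 2 * s * (2 + eta) / eta <= INR N
                    & ln (2 * INR N) <= s * eta / 2].
Proof.
move=> eps_bounds l_ge1 L_ge1 s_bounds eta_gt0 s_eta big_l.
have [N [N_lb N_le]] : exists N : nat,
    2 * s * (2 + eta) / eta < INR N <= 2 * s * (2 + eta) / eta + 1.
  by apply: nat_ceil; apply/Rlt_le/Rdiv_lt_0_compat; nra.
have N_gt0 : 0 < INR N.
  have : 0 < 2 * s * (2 + eta) / eta by apply: Rdiv_lt_0_compat; nra.
  by lra.
exists N; split=> //; first lra.
have inv_eta : / eta <= s / (eps * l).
  apply: (Rmult_le_reg_r eta) => //; rewrite Rinv_l; last lra.
  apply: (Rmult_le_reg_l (eps * l)); first nra.
  by rewrite (_ : eps * l * (s / (eps * l) * eta) = s * eta) ?Rmult_1_r //; field; nra.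
(* 2 N <= 8 s / eta + 4 s + 2, whose terms are at most 32, 8 and 2 times L^2 / eps. *)
have N2_le : 2 * INR N <= 42 / eps * (L * L).
  rewrite (_ : 2 * s * (2 + eta) / eta = 4 * s * / eta + 2 * s) in N_le; last by field; lra.
  have ieta_le : / eta <= 2 * L * / eps.
    apply: Rle_trans inv_eta _; apply: (Rmult_le_reg_r (eps * l)); first nra.
    rewrite (_ : s / (eps * l) * (eps * l) = s); last by field; nra.
    rewrite (_ : 2 * L * / eps * (eps * l) = 2 * L * l); last by field; lra.
    by nra.
  have ie_ge1 : 1 <= / eps by rewrite -Rinv_1; apply: Rinv_le_contravar; lra.
  have ieta_pos := Rinv_0_lt_compat _ eta_gt0.
  have : s * / eta <= 4 * (L * L) * / eps by nra.
  have : L <= L * L * / eps by nra.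
  by rewrite /Rdiv; nra.
apply: Rle_trans (_ : ln (42 / eps * (L * L)) <= _); first by apply: ln_monotone; lra.
have c_pos : 0 < 42 / eps by apply: Rdiv_lt_0_compat; lra.
have LL_pos : 0 < L * L by nra.
by rewrite ln_mult // ln_mult; lra.
Qed.

Section KbipAroundRoot.
Variables (n0 n1 : nat) (z : R).
Hypotheses (n0_ge2 : (2 <= n0)%N) (le_n01 : (n0 <= n1)%N) (z_gt0 : 0 < z).
Local Notation l := (ln (INR n0)).
Local Notation L := (ln (INR n1)).
Hypothesis root : exp (- z) + exp (- (z * (l / L))) = 1.

Let n0_ge : 2 <= INR n0 := INR_leq n0_ge2.
Let n01 : INR n0 <= INR n1 := INR_leq le_n01.

Lemma ln_n0_gt0 : 0 < l.
Proof. by rewrite -ln_1; apply: ln_increasing; lra. Qed.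

Lemma ln_n0_le : l <= L.
Proof. by apply: ln_monotone; lra. Qed.

Lemma ln_ratio_bounds : 0 < l / L <= 1.
Proof.
have := ln_n0_gt0; have := ln_n0_le => ? ?; split; first by apply: Rdiv_lt_0_compat; lra.
have : L * / L = 1 by field; lra.
by have := Rinv_0_lt_compat L ltac:(lra); rewrite /Rdiv; nra.
Qed.

Lemma root_le_ln : 4 <= l -> z <= ln L.
Proof.
move=> l_ge4; have [q_gt0 q_le1] := ln_ratio_bounds; have := ln_n0_le => le_lL.
have Lq : L * (l / L) = l by field; lra.
have := root_exp_neg_ge z_gt0 q_gt0 q_le1 root => e_ge.
have GL : 1 <= exp (- z) * L by nra.
have ezL : exp z <= L by have := exp_mul_opp z; have := exp_pos z; nra.
by rewrite -[X in X <= _](ln_exp z); apply: ln_monotone (exp_pos z) ezL.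
Qed.

Lemma Kbip_choosable_above_root (s : nat) eps :
  0 < eps -> 8 < eps * l -> (2 <= s)%N -> (1 + eps) * L <= INR s * z ->
  choosable (Kbip n0 n1) s.
Proof.
move=> eps_gt0 eps_l le2s s_big.
have l_gt0 := ln_n0_gt0; have le_lL := ln_n0_le; have [q_gt0 q_le1] := ln_ratio_bounds.
have s_ge2 : 2 <= INR s := INR_leq le2s.
set a := L / INR s; set t := ln 2 / INR s.
have sa : INR s * a = L by rewrite /a; field; lra.
have st : INR s * t = ln 2 by rewrite /t; field; lra.
have a_bounds : 0 <= a <= z by split; nra.
have t_bounds : 0 <= t <= 1 / 2 by have := ln2_lt_1; have := ln_lt_2; split; nra.
have gain : 2 * t < (z - a) * exp (- z).
  have excess : eps * L <= INR s * (z - a) by lra.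
  have e_ge := root_exp_neg_ge z_gt0 q_gt0 q_le1 root.
  have : eps * l / 4 <= INR s * (z - a) * exp (- z).
    apply: Rle_trans (Rmult_le_compat _ _ _ _ _ _ excess e_ge).
    - by apply: Req_le; field; lra.
    - by nra.
    - by lra.
  by have := ln2_lt_1; nra.
have half_weight c x : 0 < c -> INR s * x = ln c -> 2 * c * exp (- t - x) ^ s = 1.
  move=> c_gt0 sx; rewrite Rmult_assoc mul_exp_sub_pow // (_ : INR s * - t = - ln 2) ?exp_Ropp.
    by rewrite exp_ln; [field | lra].
  by rewrite -st; ring.
apply: (@Kbip_choosable_of_weights _ _ _ (exp (- t - a)) (exp (- t - a * (l / L)))).
- exact: leq_trans n0_ge2.
- exact: leq_trans le2s.
- split; first exact: exp_pos.
  by rewrite -exp_0; apply: exp_monotone; lra.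
- exact: exp_pos.
- rewrite /Rminus !exp_plus -Rmult_plus_distr_l.
  have := root_sum_ge q_gt0 q_le1 root a_bounds.
  have := exp_le_1_add_2x t_bounds; have := exp_mul_opp t; have := exp_pos (- t).
  by nra.
- by rewrite half_weight //; lra.
- rewrite half_weight //; [lra | lra |].
  by rewrite -Rmult_assoc sa; field; lra.
Qed.

Lemma Kbip_not_choosable_below_root (s : nat) eps :
  0 < eps <= 1 -> 1 <= l -> (0 < s)%N -> INR s * z <= (1 - eps) * L ->
  2 * ln (42 / eps) + 4 * ln L <= eps * l -> ~ choosable (Kbip n0 n1) s.
Proof.
move=> eps_bounds l_ge1 s_gt0 s_small big_l.
have le_lL := ln_n0_le; have [q_gt0 q_le1] := ln_ratio_bounds.
have s_pos : 0 < INR s by apply: (lt_INR 0); apply/ltP.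
set a := L / INR s.
have sa : INR s * a = L by rewrite /a; field; lra.
have z_le_a : z <= a by nra.
set eta := (a - z) * (l / L).
have s_eta : eps * l <= INR s * eta.
  have -> : INR s * eta = (L - INR s * z) * (l / L).
    by rewrite /eta -[X in X - INR s * z]sa; ring.
  have Lq : L * (l / L) = l by field; lra.
  by nra.
have eta_gt0 : 0 < eta by nra.
have s_le : INR s <= 2 * L by have := root_half_lt z_gt0 q_le1 root; nra.
have L_ge1 : 1 <= L by lra.
have [N [N_pos N_ge lnN]] :=
  exists_palette eps_bounds l_ge1 L_ge1 (conj s_pos s_le) eta_gt0 s_eta big_l.
set K := ln (2 * INR N) / INR s.
have K_le : K <= eta / 2.
  by apply: (Rmult_le_reg_l (INR s)) => //; rewrite /K; field_simplify; lra.
have sK : exp (INR s * K) = 2 * INR N.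
  by rewrite /K (_ : INR s * _ = ln (2 * INR N)) ?exp_ln //; [lra | field; lra].
apply: (@Kbip_not_choosable_of_weights n0 n1 s N (exp (K - a)) (exp (K - a * (l / L)))).
- exact: ltn_INR.
- exact/Rlt_le/exp_pos.
- exact/Rlt_le/exp_pos.
- by rewrite mul_exp_sub_pow; [rewrite sK; lra | lra | exact: sa].
- rewrite mul_exp_sub_pow; [rewrite sK; lra | lra |].
  by rewrite -Rmult_assoc sa; field; lra.
- apply: (Rle_trans _ (exp (K - eta) + 2 * INR s / INR N)).
    apply: Rplus_le_compat_r; rewrite /Rminus !exp_plus -Rmult_plus_distr_l.
    apply: Rmult_le_compat_l; first exact/Rlt_le/exp_pos.
    exact (root_sum_le q_le1 root z_le_a).
  by apply: exp_sub_add_ratio_le K_le => //; lra.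
Qed.

Lemma ch_Kbip_close_of_root eps :
  0 < eps <= 1 / 2 -> z <= eps * L -> 8 < eps * l ->
  2 * ln (42 / eps) + 4 * ln L <= eps * l ->
  Rabs (INR (ch (Kbip n0 n1)) / (L / z) - 1) <= 2 * eps.
Proof.
move=> eps_bounds z_small l_ge8 l_big.
have le_lL := ln_n0_le; have [_ q_le1] := ln_ratio_bounds.
have l_ge1 : 1 <= l by nra.
have z_half := root_half_lt z_gt0 q_le1 root.
set R := L / z.
have zR : R * z = L by rewrite /R; field; lra.
have R_ge : 1 <= eps * R by nra.
have [su [su_lb su_ub]] : exists su : nat, (1 + eps) * R < INR su <= (1 + eps) * R + 1.
  by apply: nat_ceil; nra.
have ch_su : choosable (Kbip n0 n1) su.
  apply: (@Kbip_choosable_above_root _ eps); try lra.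
    by apply: leq_INR => /=; nra.
  have epsRz : (1 + eps) * R * z = (1 + eps) * L by rewrite -zR; ring.
  by nra.
have [sl [sl_le sl_gt]] : exists sl : nat, INR sl <= (1 - eps) * R < INR sl + 1.
  by apply: nat_floor; nra.
have nch_sl : ~ choosable (Kbip n0 n1) sl.
  apply: (@Kbip_not_choosable_below_root _ eps); try lra.
    by apply: ltn_INR => /=; nra.
  have epsRz : (1 - eps) * R * z = (1 - eps) * L by rewrite -zR; ring.
  by nra.
have ch_le := INR_leq (ch_leq ch_su).
have ch_gt : INR sl + 1 <= INR (ch (Kbip n0 n1)).
  by rewrite -S_INR; apply/INR_leq/(ltn_ch ch_su nch_sl).
by apply: Rabs_ratio_sub1_le; nra.
Qed.

End KbipAroundRoot.

Lemma x0_root n0 n1 x0 : (2 <= n0)%N -> (n0 <= n1)%N ->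
  (let k := log2 (INR n1) / log2 (INR n0) in
   1 <= x0 /\ x0 - 1 - Rpower x0 ((k - 1) / k) = 0) ->
  0 < ln x0 /\ exp (- ln x0) + exp (- (ln x0 * (ln (INR n0) / ln (INR n1)))) = 1.
Proof.
move=> n0_ge2 le_n01 /= [x0_ge1 x0_eq].
have n0_ge : 2 <= INR n0 := INR_leq n0_ge2.
have n01 : INR n0 <= INR n1 := INR_leq le_n01.
have l_gt0 : 0 < ln (INR n0) by rewrite -ln_1; apply: ln_increasing; lra.
have le_lL : ln (INR n0) <= ln (INR n1) by apply: ln_monotone; lra.
have ln2_pos := ln_lt_2.
set l := ln (INR n0) in l_gt0 le_lL *; set L := ln (INR n1) in le_lL *; set z := ln x0.
have x0_exp : exp z = x0 by rewrite /z exp_ln //; lra.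
have k_exp : (log2 (INR n1) / log2 (INR n0) - 1) / (log2 (INR n1) / log2 (INR n0))
             = 1 - l / L by rewrite /log2 -/l -/L; field; lra.
have root : exp (- z) + exp (- (z * (l / L))) = 1.
  move: x0_eq; rewrite k_exp /Rpower -/z -x0_exp.
  rewrite (_ : (1 - l / L) * z = z + - (z * (l / L))); last by ring.
  rewrite exp_plus => x0_eq; apply: (Rmult_eq_reg_l (exp z)); last first.
    exact/Rgt_not_eq/exp_pos.
  by rewrite Rmult_plus_distr_l exp_mul_opp; lra.
split=> //; case: (Rle_lt_or_eq_dec 0 z) => [|//|z0].
  by rewrite /z -ln_1; apply: ln_monotone; lra.
by move: root; rewrite -z0 Rmult_0_l Ropp_0 exp_0; lra.
Qed.

Lemma ln_log2_bounds n : (8 <= n)%N ->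
  1 <= ln (log2 (INR n)) /\ ln (ln (INR n)) <= ln (log2 (INR n)).
Proof.
move=> n_ge8; have ln2_gt := ln_lt_2; have ln2_lt := ln2_lt_1.
have n_ge : 2 ^ 3 <= INR n by have := INR_leq n_ge8; rewrite [INR 8]/= /=; lra.
have L_ge : 3 * ln 2 <= ln (INR n).
  have -> : 3 * ln 2 = ln (2 ^ 3) by rewrite ln_pow /=; [ring | lra].
  by apply: ln_monotone; lra.
have log2_ge : 3 <= log2 (INR n).
  by apply: (Rmult_le_reg_r (ln 2)) => //; rewrite /log2; field_simplify; lra.
split.
  by rewrite -[1]ln_exp; apply: ln_monotone; [apply: exp_pos | have := exp_le_3; lra].
by apply: ln_monotone; [lra | rewrite /log2; apply: (Rmult_le_reg_r (ln 2)) => //;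
  field_simplify; nra].
Qed.

Definition ratio_threshold (eps : R) : R := (2 * ln (42 / eps) + 9) / eps.

Lemma ch_Kbip_close n0 n1 x0 eps :
  (2 <= n0)%N -> (n0 <= n1)%N -> (8 <= n1)%N -> 0 < eps <= 1 / 2 ->
  (let k := log2 (INR n1) / log2 (INR n0) in
   1 <= x0 /\ x0 - 1 - Rpower x0 ((k - 1) / k) = 0) ->
  ratio_threshold eps <= log2 (INR n0) / log2 (log2 (INR n1)) ->
  Rabs (INR (ch (Kbip n0 n1)) / (log2 (INR n1) / log2 x0) - 1) <= 2 * eps.
Proof.
move=> n0_ge2 le_n01 n1_ge8 eps_bounds x0_spec threshold.
have [z_gt0 root] := x0_root n0_ge2 le_n01 x0_spec.
have l_gt0 := ln_n0_gt0 n0_ge2; have le_lL := ln_n0_le n0_ge2 le_n01.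
have [lam_ge1 lnL_le] := ln_log2_bounds n1_ge8.
have ln2_gt := ln_lt_2.
set l := ln (INR n0) in l_gt0 le_lL threshold *.
set L := ln (INR n1) in le_lL lnL_le *.
set lam := ln (log2 (INR n1)) in lam_ge1 lnL_le.
have c_ge0 : 0 <= ln (42 / eps).
  rewrite -ln_1; apply: ln_monotone; first lra.
  by apply: (Rmult_le_reg_r eps); [lra | field_simplify; lra].
have eps_l : (2 * ln (42 / eps) + 9) * lam <= eps * l.
  rewrite (_ : log2 (INR n0) / log2 (log2 (INR n1)) = l / lam) in threshold; last first.
    by rewrite [log2 (log2 _)]/log2 -/lam /log2 -/l; field; lra.
  have -> : 2 * ln (42 / eps) + 9 = eps * ratio_threshold eps.
    by rewrite /ratio_threshold; field; lra.
  have : ratio_threshold eps * lam <= l / lam * lam by apply: Rmult_le_compat_r; lra.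
  by rewrite (_ : l / lam * lam = l); [nra | field; lra].
have z_le : ln x0 <= ln L.
  by apply: (root_le_ln n0_ge2 le_n01 z_gt0 root); rewrite -/l; nra.
have -> : log2 (INR n1) / log2 x0 = L / ln x0 by rewrite /log2 /L; field; lra.
by apply: (ch_Kbip_close_of_root n0_ge2 le_n01 z_gt0 root eps_bounds); rewrite -/l -/L; nra.
Qed.


Theorem theorem1 (n0 n1 : nat -> nat) (x0 : nat -> R) :
  (forall m, is_true (leq 2 (n0 m)) /\ is_true (leq (n0 m) (n1 m))) ->
  (forall M : nat, exists N : nat, forall m, is_true (leq N m) -> is_true (leq M (n1 m))) ->
  (forall M : R, exists N : nat, forall m, is_true (leq N m) ->
       M <= log2 (INR (n0 m)) / log2 (log2 (INR (n1 m)))) ->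
  (forall m,
     let k := log2 (INR (n1 m)) / log2 (INR (n0 m)) in
     1 <= x0 m /\ x0 m - 1 - Rpower (x0 m) ((k - 1) / k) = 0) ->
  Un_cv (fun m => INR (ch (Kbip (n0 m) (n1 m)))
                  / (log2 (INR (n1 m)) / log2 (x0 m))) 1.
Proof.
move=> sizes n1_large n0_large x0_spec eps eps_gt0.
pose e := Rmin (eps / 3) (1 / 2).
have e_bounds : 0 < e <= 1 / 2 by split; [apply: Rmin_pos; lra | apply: Rmin_r].
have e_small : 2 * e < eps by have := Rmin_l (eps / 3) (1 / 2); rewrite -/e; lra.
have [Na n1_ge8] := n1_large 8%N.
have [Nb above_threshold] := n0_large (ratio_threshold e).
exists (maxn Na Nb) => m /leP le_m; rewrite /R_dist.
have [n0_ge2 le_n01] := sizes m.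
have := ch_Kbip_close n0_ge2 le_n01 (n1_ge8 m (leq_trans (leq_maxl _ _) le_m)) e_bounds
  (x0_spec m) (above_threshold m (leq_trans (leq_maxr _ _) le_m)).
lra.
Qed.
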